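(* Let $\lambda\in(\frac16,\frac56)$ and $x\in[0,1]\setminus\mathcal E$. For every $n\ge0$, $I_n(x)$ is exactly the open interval of maximal length containing $x$ on which $F^\lambda_n$ is affine. In particular $$m_n(x)=\frac{F^\lambda_n(x)-F^\lambda_n(a_n(x))}{x-a_n(x)}$$ and $\mathrm{sgn}(m_n(x))=\mathrm{sgn}(\beta_{1,2}(x,n))\,\varepsilon_n(x)$.
   Context: Construction: $F^\lambda_0\equiv0$ on $[0,1]$ (one interval of generation $0$). Given $F^\lambda_n$ with its $4^n$ closed intervals of generation $n$ (covering $[0,1]$, disjoint interiors, $F^\lambda_n$ affine on each), on each interval $[a,b]$ of generation $n$, with $\ell=b-a$ and slope $m$, $F^\lambda_{n+1}$ coincides with $F^\lambda_n$ at $a,a+\ell/3,a+2\ell/3,b$, equals $F^\lambda_n(a+\ell/2)+\lambda\ell\sqrt{1+m^2}$ at $a+\ell/2$, and is affine on $[a,a+\ell/3],[a+\ell/3,a+\ell/2],[a+\ell/2,a+2\ell/3],[a+2\ell/3,b]$ (generation $n+1$). Dynamics: $T(x)=3x$ on $[0,\frac13)$, $6x-2$ on $[\frac13,\frac12)$, $4-6x$ on $[\frac12,\frac23)$, $3x-2$ on $[\frac23,1]$; $U(x)=0,1,2,3$ and $\widetilde U(x)=0,\frac13,\frac23,\frac23$ on these intervals respectively; $u_n(x)=U(T^nx)$, $\widetilde u_n(x)=\widetilde U(T^nx)$; $\beta_i(x,n)=\#\{k<n:u_k(x)=i\}$, $\beta_{i,j}=\beta_i+\beta_j$; $\varepsilon_n(x)=(-1)^{\beta_2(x,n)}$,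 $\ell_n(x)=3^{-\beta_{0,3}(x,n)}6^{-\beta_{1,2}(x,n)}$, $a_0(x)=0$, $a_n(x)=\sum_{k=0}^{n-1}\widetilde u_k(x)\varepsilon_k(x)\ell_k(x)$; $I_n(x)$ is the open interval with endpoints $a_n(x)$ and $a_n(x)+\varepsilon_n(x)\ell_n(x)$. $\mathcal E$ is the set of $x$ whose digit sequence $(u_n(x))$ is eventually constantly $0$ or eventually constantly $3$; for $x\notin\mathcal E$, $F^\lambda_n$ is differentiable at $x$ and $m_n(x)$ denotes its slope at $x$. $\mathrm{sgn}$ is the sign function ($\mathrm{sgn}(0)=0$). *)

From Stdlib Require Import Reals Lra List.
From Coquelicot Require Import Coquelicot.
Import ListNotations.
Open Scope R_scope.

(* F_n is encoded by its list of breakpoints (x_i, F_n(x_i)), i = 0..4^n,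
   sorted increasingly, F_n being affine between consecutive breakpoints. *)

(* the 4 new left breakpoints produced from the interval [a,b] with values fa, fb *)
Definition pieces (lam : R) (p q : R * R) : list (R * R) :=
  let a := fst p in let fa := snd p in
  let b := fst q in let fb := snd q in
  let l := b - a in
  let m := (fb - fa) / l in
  [ (a, fa);
    (a + l / 3, fa + m * (l / 3));
    (a + l / 2, (fa + m * (l / 2)) + lam * l * sqrt (1 + m ^ 2));
    (a + 2 * l / 3, fa + m * (2 * l / 3)) ].

Fixpoint refine_aux (lam : R) (p : R * R) (rest : list (R * R)) : list (R * R) :=
  match rest with
  | nil => p :: nil
  | q :: rest' => pieces lam p q ++ refine_aux lam q rest'
  end.

Definition refine (lam : R) (pts : list (R * R)) : list (R * R) :=
  match pts with
  | nil => nil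
  | p :: rest => refine_aux lam p rest
  end.

Fixpoint breakpoints (lam : R) (n : nat) : list (R * R) :=
  match n with
  | O => (0, 0) :: (1, 0) :: nil
  | S k => refine lam (breakpoints lam k)
  end.

Fixpoint interp_aux (p : R * R) (rest : list (R * R)) (x : R) : R :=
  match rest with
  | nil => snd p
  | q :: rest' =>
      if Rle_dec x (fst q)
      then snd p + (snd q - snd p) / (fst q - fst p) * (x - fst p)
      else interp_aux q rest' x
  end.

Definition interp (pts : list (R * R)) (x : R) : R :=
  match pts with
  | nil => 0
  | p :: rest => interp_aux p rest x
  end.

(* F^lambda_n (meaningful on [0,1]) *)
Definition F (lam : R) (n : nat) (x : R) : R := interp (breakpoints lam n) x.

Definition T (x : R) : R :=
  if Rlt_dec x (1/3) then 3 * x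
  else if Rlt_dec x (1/2) then 6 * x - 2
  else if Rlt_dec x (2/3) then 4 - 6 * x
  else 3 * x - 2.

Definition U (x : R) : nat :=
  if Rlt_dec x (1/3) then 0%nat
  else if Rlt_dec x (1/2) then 1%nat
  else if Rlt_dec x (2/3) then 2%nat
  else 3%nat.

Definition Ut (x : R) : R :=
  if Rlt_dec x (1/3) then 0
  else if Rlt_dec x (1/2) then 1/3
  else 2/3.

Fixpoint Titer (n : nat) (x : R) : R :=
  match n with O => x | S k => T (Titer k x) end.

Definition u (n : nat) (x : R) : nat := U (Titer n x).
Definition ut (n : nat) (x : R) : R := Ut (Titer n x).

Fixpoint beta (i : nat) (x : R) (n : nat) : nat :=
  match n with
  | O => O
  | S k => (beta i x k + (if Nat.eqb (u k x) i then 1 else 0))%nat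
  end.

Definition beta2 (i j : nat) (x : R) (n : nat) : nat := (beta i x n + beta j x n)%nat.

Definition eps (x : R) (n : nat) : R := (-1) ^ (beta 2 x n).

Definition ell (x : R) (n : nat) : R :=
  / (3 ^ (beta2 0 3 x n) * 6 ^ (beta2 1 2 x n)).

Fixpoint a (x : R) (n : nat) : R :=
  match n with
  | O => 0
  | S k => a x k + ut k x * eps x k * ell x k
  end.

Definition I_lo (x : R) (n : nat) : R := Rmin (a x n) (a x n + eps x n * ell x n).
Definition I_hi (x : R) (n : nat) : R := Rmax (a x n) (a x n + eps x n * ell x n).

Definition inE (x : R) : Prop :=
  exists N : nat,
    (forall k, (N <= k)%nat -> u k x = 0%nat) \/
    (forall k, (N <= k)%nat -> u k x = 3%nat).

Definition AffineOn (f : R -> R) (c d : R) : Prop :=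
  exists alpha beta0 : R, forall t, c < t < d -> f t = alpha * t + beta0.

Definition sgn (y : R) : R :=
  if Rlt_dec 0 y then 1 else if Rlt_dec y 0 then -1 else 0.

Definition m (lam : R) (n : nat) (x : R) : R := Derive (F lam n) x.

(* Refinement replaces a
   segment of slope S by four segments of slopes S, S + 6λ√(1+S²), S − 6λ√(1+S²), S, so
   for λ ≠ 0 consecutive slopes always differ and no interval on which F^λ_n is affine
   contains a breakpoint in its interior.  Along the orbit of x, the digit u_n(x), read in
   the orientation ε_n(x), selects which of the four new segments is I_{n+1}(x); hence
   I_n(x) always joins two consecutive breakpoints, which makes it maximal.  Since
   √(1+S²) > |S|, for λ ≥ 1/6 the two middle slopes are positive and negative, and this
   propagates the sign formula. *)

From Pilot Require Import Defs.
From Stdlib Require Import Reals Lra Lia List Sorting.Sorted.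
From Coquelicot Require Import Coquelicot.
Import ListNotations.
Open Scope R_scope.

Definition slope (p q : R * R) : R := (snd q - snd p) / (fst q - fst p).

Definition lin (p q : R * R) (t : R) : R := snd p + slope p q * (t - fst p).

Definition sorted_x : list (R * R) -> Prop := Sorted (fun p q => fst p < fst q).

Fixpoint kinked (l : list (R * R)) : Prop :=
  match l with
  | [] => True
  | o :: t => match t with p :: q :: _ => slope o p <> slope p q | _ => True end /\ kinked t
  end.

Definition adjacent (l : list (R * R)) (p q : R * R) : Prop :=
  exists l1 l2, l = l1 ++ p :: q :: l2.

Lemma lin_affine p q t : lin p q t = slope p q * t + (snd p - slope p q * fst p).
Proof. unfold lin; ring. Qed.

Lemma lin_difference_quotient p q t s :
  t <> s -> (lin p q t - lin p q s) / (t - s) = slope p q.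
Proof. intros Hts; unfold lin; field; lra. Qed.

Lemma sorted_x_cons p q l :
  fst p < fst q -> sorted_x (q :: l) -> sorted_x (p :: q :: l).
Proof. intros Hpq Hs; constructor; [exact Hs | now constructor]. Qed.

Lemma sorted_x_app l1 l2 w z :
  sorted_x (l1 ++ l2) -> In w l1 -> In z l2 -> fst w < fst z.
Proof.
  intros Hs. apply Sorted_StronglySorted in Hs; [|intros ? ? ?; lra].
  induction l1 as [|v l1 IH]; [contradiction|].
  apply StronglySorted_inv in Hs as [Hs Hv]. rewrite List.Forall_forall in Hv.
  intros [<- | Hw] Hz; [apply Hv, in_or_app; auto | auto].
Qed.

Lemma sorted_x_adjacent l p q : sorted_x l -> adjacent l p q -> fst p < fst q.
Proof.
  intros Hs [l1 [l2 ->]].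
  apply (sorted_x_app (l1 ++ [p]) (q :: l2)).
  - now rewrite <- app_assoc.
  - apply in_or_app; simpl; auto.
  - now left.
Qed.

Lemma sorted_x_bounds b0 M b1 w :
  sorted_x (b0 :: M ++ [b1]) -> In w (b0 :: M ++ [b1]) -> fst b0 <= fst w <= fst b1.
Proof.
  intros Hs Hw. split.
  - destruct Hw as [<- | Hw]; [lra|].
    apply Rlt_le, (sorted_x_app [b0] (M ++ [b1])); simpl; auto.
  - rewrite app_comm_cons in Hs, Hw. apply in_app_or in Hw as [Hw | [<- | []]]; [|lra].
    apply Rlt_le, (sorted_x_app (b0 :: M) [b1]); simpl; auto.
Qed.

Lemma kinked_app l1 o p q l2 :
  kinked (l1 ++ o :: p :: q :: l2) -> slope o p <> slope p q.
Proof. induction l1 as [|z l1 IH]; simpl; [tauto | intros [_ H]; auto]. Qed.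

Lemma interp_aux_segment p0 l p q l2 t :
  List.Forall (fun w => fst w < t) (l ++ [p]) -> t <= fst q ->
  interp_aux p0 (l ++ p :: q :: l2) t = lin p q t.
Proof.
  revert p0; induction l as [|w l IH]; intros p0 Hlt Ht; simpl in *;
    inversion Hlt as [|? ? Hw Hlt']; subst.
  - destruct (Rle_dec t (fst p)); [lra|].
    destruct (Rle_dec t (fst q)); [reflexivity | lra].
  - destruct (Rle_dec t (fst w)); [lra | auto].
Qed.

Lemma interp_segment_open l1 p q l2 t :
  sorted_x (l1 ++ p :: q :: l2) -> fst p < t <= fst q ->
  Defs.interp (l1 ++ p :: q :: l2) t = lin p q t.
Proof.
  intros Hs Ht. destruct l1 as [|z l1]; simpl.
  - destruct (Rle_dec t (fst q)); [reflexivity | lra].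
  - apply interp_aux_segment; [|lra].
    apply List.Forall_forall. intros w Hw. apply in_app_or in Hw as [Hw | [<- | []]]; [|lra].
    enough (fst w < fst p) by lra.
    apply (sorted_x_app (z :: l1) (p :: q :: l2)); simpl; auto.
Qed.

Lemma interp_adjacent l p q t :
  sorted_x l -> adjacent l p q -> fst p <= t <= fst q -> Defs.interp l t = lin p q t.
Proof.
  intros Hs Hadj Ht. pose proof (sorted_x_adjacent l p q Hs Hadj) as Hpq.
  destruct Hadj as [l1 [l2 ->]].
  destruct (Req_dec t (fst p)) as [->|]; [|apply interp_segment_open; auto; lra].
  replace (lin p q (fst p)) with (snd p) by (unfold lin; ring).
  destruct l1 as [|o l0 _] using rev_ind; simpl.
  - destruct (Rle_dec (fst p) (fst q)); [unfold lin; ring | lra].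
  - rewrite <- app_assoc in Hs |- *. simpl in Hs |- *.
    assert (fst o < fst p) by (apply (sorted_x_adjacent _ o p Hs); now exists l0, (q :: l2)).
    rewrite interp_segment_open; [unfold lin, slope; field | |]; auto; lra.
Qed.

Lemma interp_segment_slope l p q al be t1 t2 :
  sorted_x l -> adjacent l p q -> t1 <> t2 ->
  fst p <= t1 <= fst q -> fst p <= t2 <= fst q ->
  Defs.interp l t1 = al * t1 + be -> Defs.interp l t2 = al * t2 + be -> al = slope p q.
Proof.
  intros Hs Hadj Ht H1 H2 E1 E2.
  rewrite (interp_adjacent l p q) in E1, E2 by auto. rewrite lin_affine in E1, E2.
  assert (E : (al - slope p q) * (t1 - t2) = 0) by lra.
  apply Rmult_integral in E as [E | E]; lra.
Qed.

Lemma interp_not_affine_across l l1 o p q l2 c d :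
  l = l1 ++ o :: p :: q :: l2 -> sorted_x l -> kinked l ->
  c < fst p < d -> ~ AffineOn (Defs.interp l) c d.
Proof.
  intros -> Hs Hk Hcd [al [be Hab]].
  assert (Hop : adjacent (l1 ++ o :: p :: q :: l2) o p) by now exists l1, (q :: l2).
  assert (Hpq : adjacent (l1 ++ o :: p :: q :: l2) p q)
    by (exists (l1 ++ [o]), l2; now rewrite <- app_assoc).
  pose proof (sorted_x_adjacent _ o p Hs Hop). pose proof (sorted_x_adjacent _ p q Hs Hpq).
  set (c' := Rmax c (fst o)). set (d' := Rmin d (fst q)).
  assert (c <= c' /\ fst o <= c' < fst p) as [? ?].
  { split; [apply Rmax_l|]. split; [apply Rmax_r | apply Rmax_lub_lt; lra]. }
  assert (d' <= d /\ fst p < d' <= fst q) as [? ?].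
  { split; [apply Rmin_l|]. split; [apply Rmin_glb_lt; lra | apply Rmin_r]. }
  apply (kinked_app l1 o p q l2 Hk). transitivity al; [symmetry|].
  - apply (interp_segment_slope _ o p al be (fst p) ((c' + fst p) / 2) Hs Hop);
      try lra; apply Hab; lra.
  - apply (interp_segment_slope _ p q al be (fst p) ((fst p + d') / 2) Hs Hpq);
      try lra; apply Hab; lra.
Qed.

Lemma interp_affine_maximal l b0 M b1 p q c d t :
  l = b0 :: M ++ [b1] -> sorted_x l -> kinked l -> adjacent l p q ->
  fst b0 <= c -> d <= fst b1 -> c < t < d -> fst p < t < fst q ->
  AffineOn (Defs.interp l) c d -> fst p <= c /\ d <= fst q.
Proof.
  intros Hends Hs Hk [l1 [l2 Hl]] Hc Hd Ht Htpq Haff. split.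
  - destruct (Rle_dec (fst p) c) as [|Hpc]; [assumption | exfalso].
    destruct l1 as [|o l0 _] using rev_ind.
    + rewrite Hends in Hl. injection Hl as <- _. lra.
    + rewrite <- app_assoc in Hl.
      exact (interp_not_affine_across l l0 o p q l2 c d Hl Hs Hk ltac:(lra) Haff).
  - destruct (Rle_dec d (fst q)) as [|Hdq]; [assumption | exfalso].
    destruct l2 as [|r l2].
    + rewrite Hends, app_comm_cons in Hl.
      replace (l1 ++ [p; q]) with ((l1 ++ [p]) ++ [q]) in Hl by now rewrite <- app_assoc.
      apply app_inj_tail in Hl as [_ <-]. lra.
    + exact (interp_not_affine_across l l1 p q r l2 c d Hl Hs Hk ltac:(lra) Haff).
Qed.

Lemma is_derive_affine_on (f : R -> R) c d al be x :
  (forall t, c < t < d -> f t = al * t + be) -> c < x < d -> is_derive f x al.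
Proof.
  intros Hf Hx. apply (is_derive_ext_loc (fun t => al * t + be)).
  - apply (filter_imp (fun t => c < t /\ t < d)); [intros t Ht; symmetry; auto|].
    apply (open_and _ _ (open_gt c) (open_lt d)). lra.
  - auto_derive; [easy | ring].
Qed.

Definition third_pt (p q : R * R) : R * R :=
  (fst p + (fst q - fst p) / 3, snd p + slope p q * ((fst q - fst p) / 3)).

Definition peak_pt (lam : R) (p q : R * R) : R * R :=
  (fst p + (fst q - fst p) / 2,
   snd p + slope p q * ((fst q - fst p) / 2) + lam * (fst q - fst p) * sqrt (1 + slope p q ^ 2)).

Definition two_thirds_pt (p q : R * R) : R * R :=
  (fst p + 2 * (fst q - fst p) / 3, snd p + slope p q * (2 * (fst q - fst p) / 3)).

Lemma refine_aux_cons lam p q rest :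
  refine_aux lam p (q :: rest) =
  p :: third_pt p q :: peak_pt lam p q :: two_thirds_pt p q :: refine_aux lam q rest.
Proof. now destruct p. Qed.

Lemma refine_aux_hd lam p rest : exists Y, refine_aux lam p rest = p :: Y.
Proof. destruct rest; [exists [] | rewrite refine_aux_cons; eexists]; reflexivity. Qed.

Lemma refine_aux_ends lam p rest z :
  exists M, refine_aux lam p (rest ++ [z]) = p :: M ++ [z].
Proof.
  revert p; induction rest as [|r rest IH]; intros p; simpl app; rewrite refine_aux_cons.
  - now exists [third_pt p z; peak_pt lam p z; two_thirds_pt p z].
  - destruct (IH r) as [M ->].
    now exists (third_pt p r :: peak_pt lam p r :: two_thirds_pt p r :: r :: M).
Qed.

Lemma refine_window lam l1 p q l2 :
  exists X Y, refine lam (l1 ++ p :: q :: l2) =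
    X ++ p :: third_pt p q :: peak_pt lam p q :: two_thirds_pt p q :: q :: Y.
Proof.
  induction l1 as [|z l1 [X [Y IH]]].
  - destruct (refine_aux_hd lam q l2) as [Y HY].
    exists [], Y. cbn [app refine]. now rewrite refine_aux_cons, HY.
  - simpl app. destruct (l1 ++ p :: q :: l2) as [|w rest] eqn:E; [now destruct l1|].
    exists (pieces lam z w ++ X), Y. rewrite <- app_assoc, <- IH. reflexivity.
Qed.

Lemma refine_adjacent lam l p q : adjacent l p q ->
  adjacent (refine lam l) p (third_pt p q) /\
  adjacent (refine lam l) (third_pt p q) (peak_pt lam p q) /\
  adjacent (refine lam l) (peak_pt lam p q) (two_thirds_pt p q) /\
  adjacent (refine lam l) (two_thirds_pt p q) q.
Proof.
  intros [l1 [l2 ->]]. destruct (refine_window lam l1 p q l2) as [X [Y ->]].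
  repeat split.
  - now exists X, (peak_pt lam p q :: two_thirds_pt p q :: q :: Y).
  - now exists (X ++ [p]), (two_thirds_pt p q :: q :: Y); rewrite <- app_assoc.
  - now exists (X ++ [p; third_pt p q]), (q :: Y); rewrite <- app_assoc.
  - now exists (X ++ [p; third_pt p q; peak_pt lam p q]), Y; rewrite <- app_assoc.
Qed.

Section Slopes.

Variables (lam : R) (p q : R * R).
Hypothesis Hpq : fst p <> fst q.

Lemma slope_first_third : slope p (third_pt p q) = slope p q.
Proof. unfold slope at 1; unfold third_pt; simpl. field. lra. Qed.

Lemma slope_up_to_peak :
  slope (third_pt p q) (peak_pt lam p q) = slope p q + 6 * lam * sqrt (1 + slope p q ^ 2).
Proof. unfold slope at 1; unfold third_pt, peak_pt; simpl. field. lra. Qed.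

Lemma slope_down_from_peak :
  slope (peak_pt lam p q) (two_thirds_pt p q) = slope p q - 6 * lam * sqrt (1 + slope p q ^ 2).
Proof. unfold slope at 1; unfold peak_pt, two_thirds_pt; simpl. field. lra. Qed.

Lemma slope_last_third : slope (two_thirds_pt p q) q = slope p q.
Proof. unfold two_thirds_pt, slope; simpl. field. lra. Qed.

End Slopes.

Lemma sqrt_1_plus_sq_gt s : Rabs s < sqrt (1 + s ^ 2).
Proof.
  rewrite <- sqrt_Rsqr_abs. apply sqrt_lt_1; [apply Rle_0_sqr | nra | unfold Rsqr; nra].
Qed.

Lemma peak_shift_neq0 lam s : lam <> 0 -> 6 * lam * sqrt (1 + s ^ 2) <> 0.
Proof.
  intros Hlam. pose proof (sqrt_1_plus_sq_gt s). pose proof (Rabs_pos s).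
  apply Rmult_integral_contrapositive; split; lra.
Qed.

Lemma slope_up_to_peak_pos lam s : 1/6 <= lam -> 0 < s + 6 * lam * sqrt (1 + s ^ 2).
Proof.
  intros Hlam. pose proof (sqrt_1_plus_sq_gt s) as Hr. pose proof (Rle_abs (- s)).
  rewrite Rabs_Ropp in *. set (r := sqrt (1 + s ^ 2)) in *.
  assert (r <= 6 * lam * r) by (pose proof (Rabs_pos s); nra). lra.
Qed.

Lemma slope_down_from_peak_neg lam s : 1/6 <= lam -> s - 6 * lam * sqrt (1 + s ^ 2) < 0.
Proof.
  intros Hlam. pose proof (sqrt_1_plus_sq_gt s) as Hr. pose proof (Rle_abs s).
  set (r := sqrt (1 + s ^ 2)) in *.
  assert (r <= 6 * lam * r) by (pose proof (Rabs_pos s); nra). lra.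
Qed.

Lemma refine_aux_sorted lam p rest :
  sorted_x (p :: rest) -> sorted_x (refine_aux lam p rest).
Proof.
  revert p; induction rest as [|q rest IH]; intros p Hs; [now repeat constructor|].
  apply Sorted_inv in Hs as [Hs Hpq]. apply HdRel_inv in Hpq.
  specialize (IH q Hs). destruct (refine_aux_hd lam q rest) as [Y HY].
  rewrite refine_aux_cons, HY. rewrite HY in IH.
  repeat apply sorted_x_cons; auto; unfold third_pt, peak_pt, two_thirds_pt; simpl; lra.
Qed.

Lemma kinked_cons o p q l :
  slope o p <> slope p q -> kinked (p :: q :: l) -> kinked (o :: p :: q :: l).
Proof. simpl; tauto. Qed.

Lemma refine_aux_kinked lam p rest : lam <> 0 ->
  sorted_x (p :: rest) -> kinked (p :: rest) -> kinked (refine_aux lam p rest).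
Proof.
  intros Hlam. revert p; induction rest as [|q rest IH]; intros p Hs Hk; [simpl; tauto|].
  apply Sorted_inv in Hs as [Hs Hpq]. apply HdRel_inv in Hpq.
  pose proof (peak_shift_neq0 lam (slope p q) Hlam).
  assert (Hnext : kinked (refine_aux lam q rest)) by (apply IH; [exact Hs | exact (proj2 Hk)]).
  rewrite refine_aux_cons.
  apply kinked_cons; [rewrite slope_first_third, slope_up_to_peak by lra; lra|].
  destruct rest as [|r rest].
  - simpl refine_aux.
    apply kinked_cons; [rewrite slope_up_to_peak, slope_down_from_peak by lra; lra|].
    apply kinked_cons; [rewrite slope_down_from_peak, slope_last_third by lra; lra|].
    simpl; tauto.
  - apply Sorted_inv in Hs as [_ Hqr]. apply HdRel_inv in Hqr.
    rewrite refine_aux_cons in Hnext |- *.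
    apply kinked_cons; [rewrite slope_up_to_peak, slope_down_from_peak by lra; lra|].
    apply kinked_cons; [rewrite slope_down_from_peak, slope_last_third by lra; lra|].
    apply kinked_cons; [|exact Hnext].
    rewrite slope_last_third, slope_first_third by lra. simpl in Hk; tauto.
Qed.

Lemma refine_sorted lam l : sorted_x l -> sorted_x (refine lam l).
Proof. destruct l; [auto | apply refine_aux_sorted]. Qed.

Lemma refine_kinked lam l : lam <> 0 -> sorted_x l -> kinked l -> kinked (refine lam l).
Proof. destruct l; [auto | apply refine_aux_kinked]. Qed.

Lemma breakpoints_sorted lam n : sorted_x (breakpoints lam n).
Proof.
  induction n as [|n IH]; [|now apply refine_sorted].
  apply sorted_x_cons; [simpl; lra | now repeat constructor].
Qed.

Lemma breakpoints_kinked lam n : lam <> 0 -> kinked (breakpoints lam n).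
Proof.
  intros Hlam; induction n as [|n IH]; [simpl; tauto|].
  apply refine_kinked; auto using breakpoints_sorted.
Qed.

Lemma breakpoints_ends lam n : exists M, breakpoints lam n = (0, 0) :: M ++ [(1, 0)].
Proof.
  induction n as [|n [M IH]]; [now exists []|].
  simpl. rewrite IH. apply refine_aux_ends.
Qed.

Lemma digit_cases y :
  (y < 1/3 /\ U y = 0%nat /\ Ut y = 0 /\ T y = 3 * y) \/
  (1/3 <= y < 1/2 /\ U y = 1%nat /\ Ut y = 1/3 /\ T y = 6 * y - 2) \/
  (1/2 <= y < 2/3 /\ U y = 2%nat /\ Ut y = 2/3 /\ T y = 4 - 6 * y) \/
  (2/3 <= y /\ U y = 3%nat /\ Ut y = 2/3 /\ T y = 3 * y - 2).
Proof.
  unfold U, Ut, T.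
  destruct (Rlt_dec y (1/3)); [left; auto|].
  destruct (Rlt_dec y (1/2)); [right; left; repeat split; auto; lra|].
  destruct (Rlt_dec y (2/3)); [right; right; left; repeat split; auto; lra|].
  right; right; right; repeat split; auto; lra.
Qed.

Lemma beta_S i x n :
  beta i x (S n) = (beta i x n + if Nat.eqb (u n x) i then 1 else 0)%nat.
Proof. reflexivity. Qed.

Lemma eps_S x n : eps x (S n) = eps x n * (if Nat.eqb (u n x) 2 then -1 else 1).
Proof. unfold eps. rewrite beta_S, pow_add. destruct (Nat.eqb _ 2); simpl; ring. Qed.

Lemma ell_S x n :
  let k i := (if Nat.eqb (u n x) i then 1 else 0)%nat in
  ell x (S n) = ell x n / (3 ^ (k 0%nat + k 3%nat) * 6 ^ (k 1%nat + k 2%nat)).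
Proof.
  intros k. unfold ell, beta2. rewrite !beta_S. fold (k 0%nat) (k 1%nat) (k 2%nat) (k 3%nat).
  replace (beta 0 x n + k 0%nat + (beta 3 x n + k 3%nat))%nat
    with ((beta 0 x n + beta 3 x n) + (k 0%nat + k 3%nat))%nat by lia.
  replace (beta 1 x n + k 1%nat + (beta 2 x n + k 2%nat))%nat
    with ((beta 1 x n + beta 2 x n) + (k 1%nat + k 2%nat))%nat by lia.
  rewrite !pow_add.
  assert (forall j, 3 ^ j <> 0) by (intros; apply pow_nonzero; lra).
  assert (forall j, 6 ^ j <> 0) by (intros; apply pow_nonzero; lra).
  field. repeat split; auto.
Qed.

Lemma beta2_12_S x n :
  beta2 1 2 x (S n) =
  (beta2 1 2 x n + (if Nat.eqb (u n x) 1 then 1 else 0) + (if Nat.eqb (u n x) 2 then 1 else 0))%nat.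
Proof. unfold beta2. rewrite !beta_S. lia. Qed.

Lemma orbit_step x n : let y := Titer n x in
  (y < 1/3 /\ Titer (S n) x = 3 * y /\
     a x (S n) = a x n /\ eps x (S n) = eps x n /\
     ell x (S n) = ell x n / 3 /\ beta2 1 2 x (S n) = beta2 1 2 x n) \/
  (1/3 <= y < 1/2 /\ Titer (S n) x = 6 * y - 2 /\
     a x (S n) = a x n + eps x n * ell x n / 3 /\ eps x (S n) = eps x n /\
     ell x (S n) = ell x n / 6 /\ beta2 1 2 x (S n) = S (beta2 1 2 x n)) \/
  (1/2 <= y < 2/3 /\ Titer (S n) x = 4 - 6 * y /\
     a x (S n) = a x n + 2 * eps x n * ell x n / 3 /\ eps x (S n) = - eps x n /\
     ell x (S n) = ell x n / 6 /\ beta2 1 2 x (S n) = S (beta2 1 2 x n)) \/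
  (2/3 <= y /\ Titer (S n) x = 3 * y - 2 /\
     a x (S n) = a x n + 2 * eps x n * ell x n / 3 /\ eps x (S n) = eps x n /\
     ell x (S n) = ell x n / 3 /\ beta2 1 2 x (S n) = beta2 1 2 x n).
Proof.
  intros y. rewrite eps_S, ell_S, beta2_12_S.
  change (a x (S n)) with (a x n + Ut y * eps x n * ell x n).
  change (Titer (S n) x) with (T y). unfold u; fold y.
  destruct (digit_cases y) as [(?&->&->&->)|[(?&->&->&->)|[(?&->&->&->)|(?&->&->&->)]]];
    simpl; [left | right; left | right; right; left | right; right; right];
    repeat split; auto; try field; try lra; lia.
Qed.

Lemma eps_pm x n : eps x n = 1 \/ eps x n = -1.
Proof.
  unfold eps. induction (beta 2 x n) as [|k IH]; simpl; [auto|].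
  destruct IH as [-> | ->]; [right | left]; ring.
Qed.

Lemma ell_pos x n : 0 < ell x n.
Proof. unfold ell. apply Rinv_0_lt_compat, Rmult_lt_0_compat; apply pow_lt; lra. Qed.

Lemma Titer_unit x n : 0 <= x <= 1 -> 0 <= Titer n x <= 1.
Proof.
  intros Hx. induction n as [|n IH]; [exact Hx|]. simpl.
  destruct (digit_cases (Titer n x)) as [(?&_&_&->)|[(?&_&_&->)|[(?&_&_&->)|(?&_&_&->)]]]; lra.
Qed.

Lemma x_eq_orbit x n : x = a x n + eps x n * ell x n * Titer n x.
Proof.
  induction n as [|n IH].
  - unfold eps, ell, beta2. simpl. field.
  - destruct (orbit_step x n)
      as [(_&->&->&->&->&_)|[(_&->&->&->&->&_)|[(_&->&->&->&->&_)|(_&->&->&->&->&_)]]];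
      rewrite IH at 1; field.
Qed.

Lemma Titer_fixed x n c : T c = c -> Titer n x = c -> forall j, Titer (j + n) x = c.
Proof. intros Hc H j; induction j as [|j IH]; simpl; [auto | now rewrite IH]. Qed.

Lemma dynamics_at_0 : T 0 = 0 /\ U 0 = 0%nat.
Proof. destruct (digit_cases 0) as [(_&->&_&->)|[(?&_)|[(?&_)|(?&_)]]]; split; lra || lia. Qed.

Lemma dynamics_at_1 : T 1 = 1 /\ U 1 = 3%nat.
Proof. destruct (digit_cases 1) as [(?&_)|[(?&_)|[(?&_)|(_&->&_&->)]]]; split; lra || lia. Qed.

Lemma inE_of_fixed_point x n c :
  T c = c -> U c = 0%nat \/ U c = 3%nat -> Titer n x = c -> inE x.
Proof.
  intros Hc HU Hn. exists n.
  destruct HU as [HU | HU]; [left | right]; intros k Hk; unfold u;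
    replace k with ((k - n) + n)%nat by lia; now rewrite (Titer_fixed x n c Hc Hn).
Qed.

Lemma Titer_interior x n : 0 <= x <= 1 -> ~ inE x -> 0 < Titer n x < 1.
Proof.
  intros Hx HE. pose proof (Titer_unit x n Hx).
  destruct dynamics_at_0 as [T0 U0]. destruct dynamics_at_1 as [T1 U1].
  assert (Titer n x <> 0) by (intros E; apply HE, (inE_of_fixed_point x n 0); auto).
  assert (Titer n x <> 1) by (intros E; apply HE, (inE_of_fixed_point x n 1); auto).
  lra.
Qed.

Lemma I_lo_eq x n : I_lo x n = a x n - (1 - eps x n) / 2 * ell x n.
Proof.
  pose proof (ell_pos x n). unfold I_lo, Rmin.
  destruct (eps_pm x n) as [-> | ->]; destruct (Rle_dec _ _); lra.
Qed.

Lemma I_hi_eq x n : I_hi x n = a x n + (1 + eps x n) / 2 * ell x n.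
Proof.
  pose proof (ell_pos x n). unfold I_hi, Rmax.
  destruct (eps_pm x n) as [-> | ->]; destruct (Rle_dec _ _); lra.
Qed.

Lemma a_endpoint x n : a x n = I_lo x n \/ a x n = I_hi x n.
Proof. rewrite I_lo_eq, I_hi_eq. destruct (eps_pm x n) as [-> | ->]; [left | right]; lra. Qed.

Lemma x_in_I x n : 0 <= x <= 1 -> ~ inE x -> I_lo x n < x < I_hi x n.
Proof.
  intros Hx HE. pose proof (Titer_interior x n Hx HE). pose proof (ell_pos x n).
  pose proof (x_eq_orbit x n). rewrite I_lo_eq, I_hi_eq.
  destruct (eps_pm x n) as [E | E]; rewrite E in *; split; nra.
Qed.

Lemma sgn_pos y : 0 < y -> sgn y = 1.
Proof. intros; unfold sgn; destruct (Rlt_dec 0 y); [auto | lra]. Qed.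

Lemma sgn_neg y : y < 0 -> sgn y = -1.
Proof.
  intros; unfold sgn; destruct (Rlt_dec 0 y); [lra|]. destruct (Rlt_dec y 0); [auto | lra].
Qed.

Lemma sgn_0 : sgn 0 = 0.
Proof. unfold sgn; destruct (Rlt_dec 0 0); [lra|]. destruct (Rlt_dec 0 0); [lra | auto]. Qed.

Definition slope_sign (x : R) (n : nat) : R := sgn (INR (beta2 1 2 x n)) * eps x n.

Lemma I_succ x n :
  let lo := I_lo x n in let len := I_hi x n - I_lo x n in
  (I_lo x (S n) = lo /\ I_hi x (S n) = lo + len / 3 /\
     slope_sign x (S n) = slope_sign x n) \/
  (I_lo x (S n) = lo + len / 3 /\ I_hi x (S n) = lo + len / 2 /\ slope_sign x (S n) = 1) \/
  (I_lo x (S n) = lo + len / 2 /\ I_hi x (S n) = lo + 2 * len / 3 /\ slope_sign x (S n) = -1) \/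
  (I_lo x (S n) = lo + 2 * len / 3 /\ I_hi x (S n) = lo + len /\
     slope_sign x (S n) = slope_sign x n).
Proof.
  cbv zeta. unfold slope_sign. rewrite !I_lo_eq, !I_hi_eq.
  pose proof (sgn_pos (INR (S (beta2 1 2 x n))) ltac:(apply lt_0_INR; lia)) as Hsgn.
  destruct (orbit_step x n)
    as [(_&_&->&->&->&->)|[(_&_&->&->&->&->)|[(_&_&->&->&->&->)|(_&_&->&->&->&->)]]];
    rewrite ?Hsgn; destruct (eps_pm x n) as [-> | ->];
    first [ left; repeat split; lra
          | right; left; repeat split; lra
          | right; right; left; repeat split; lra
          | right; right; right; repeat split; lra ].
Qed.

Lemma I_is_segment lam x n : 1/6 <= lam ->
  exists p q, adjacent (breakpoints lam n) p q /\ fst p = I_lo x n /\ fst q = I_hi x n /\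
    sgn (slope p q) = slope_sign x n.
Proof.
  intros Hlam. induction n as [|n (p & q & Hadj & Hp & Hq & Hsgn)].
  - exists (0, 0), (1, 0). rewrite I_lo_eq, I_hi_eq. unfold slope_sign, slope, eps, ell, beta2.
    simpl. rewrite Rmult_1_r, Rinv_1, !Rminus_0_r, Rdiv_0_l, sgn_0.
    repeat split; [now exists [], [] | lra | lra | ring].
  - destruct (refine_adjacent lam _ p q Hadj) as (H1 & H2 & H3 & H4).
    assert (Hpq : fst p < fst q).
    { pose proof (ell_pos x n). rewrite Hp, Hq, I_lo_eq, I_hi_eq.
      destruct (eps_pm x n) as [-> | ->]; lra. }
    pose proof (slope_up_to_peak_pos lam (slope p q) Hlam).
    pose proof (slope_down_from_peak_neg lam (slope p q) Hlam).
    destruct (I_succ x n) as [(?&?&->)|[(?&?&->)|[(?&?&->)|(?&?&->)]]].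
    + exists p, (third_pt p q); simpl; rewrite slope_first_third by lra.
      repeat split; auto; lra.
    + exists (third_pt p q), (peak_pt lam p q); simpl; rewrite slope_up_to_peak by lra.
      repeat split; auto; try lra. now apply sgn_pos.
    + exists (peak_pt lam p q), (two_thirds_pt p q); simpl; rewrite slope_down_from_peak by lra.
      repeat split; auto; try lra. now apply sgn_neg.
    + exists (two_thirds_pt p q), q; simpl; rewrite slope_last_third by lra.
      repeat split; auto; lra.
Qed.

Lemma F_on_segment lam n p q t : adjacent (breakpoints lam n) p q ->
  fst p <= t <= fst q -> F lam n t = lin p q t.
Proof. intros; apply interp_adjacent; auto using breakpoints_sorted. Qed.

Lemma F_segment_in_unit lam n p q : adjacent (breakpoints lam n) p q ->
  0 <= fst p /\ fst q <= 1.
Proof.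
  intros Hadj. destruct (breakpoints_ends lam n) as [M HM].
  pose proof (breakpoints_sorted lam n) as Hs. rewrite HM in Hs, Hadj.
  destruct Hadj as [l1 [l2 Hl]].
  pose proof (sorted_x_bounds _ M _ p Hs ltac:(rewrite Hl; apply in_or_app; simpl; auto)).
  pose proof (sorted_x_bounds _ M _ q Hs ltac:(rewrite Hl; apply in_or_app; simpl; auto)).
  simpl in *; lra.
Qed.

Lemma F_segment_maximal lam n p q c d t : lam <> 0 -> adjacent (breakpoints lam n) p q ->
  0 <= c -> d <= 1 -> c < t < d -> fst p < t < fst q ->
  AffineOn (F lam n) c d -> fst p <= c /\ d <= fst q.
Proof.
  intros Hlam Hadj. destruct (breakpoints_ends lam n) as [M HM].
  apply (interp_affine_maximal _ (0, 0) M (1, 0));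
    auto using breakpoints_sorted, breakpoints_kinked.
Qed.

Theorem lemma3p2 (lam x : R) :
  1/6 < lam < 5/6 -> 0 <= x <= 1 -> ~ inE x ->
  forall n : nat,
    (* I_n(x) is an open interval inside [0,1] containing x, F_n is affine on it *)
    (0 <= I_lo x n /\ I_lo x n < x < I_hi x n /\ I_hi x n <= 1 /\
     AffineOn (F lam n) (I_lo x n) (I_hi x n) /\
     (* and it is the maximal one (by length, and hence by inclusion) *)
     (forall c d, 0 <= c -> d <= 1 -> c < x < d -> AffineOn (F lam n) c d ->
        d - c <= I_hi x n - I_lo x n /\ I_lo x n <= c /\ d <= I_hi x n)) /\
    ex_derive (F lam n) x /\
    m lam n x = (F lam n x - F lam n (a x n)) / (x - a x n) /\
    sgn (m lam n x) = sgn (INR (beta2 1 2 x n)) * eps x n.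
Proof.
  intros [Hlam _] Hx HE n.
  pose proof (x_in_I x n Hx HE) as Hxin. pose proof (a_endpoint x n) as Ha.
  destruct (I_is_segment lam x n) as (p & q & Hadj & Hp & Hq & Hsgn); [lra|].
  rewrite <- Hp, <- Hq in Hxin, Ha |- *.
  destruct (F_segment_in_unit lam n p q Hadj) as [Hp0 Hq1].
  assert (Hline : forall t, fst p < t < fst q ->
                    F lam n t = slope p q * t + (snd p - slope p q * fst p)).
  { intros t Ht. rewrite (F_on_segment lam n p q t Hadj) by lra. apply lin_affine. }
  pose proof (is_derive_affine_on _ _ _ _ _ x Hline Hxin) as Hder.
  unfold m. rewrite (is_derive_unique _ _ _ Hder).
  refine (conj (conj Hp0 (conj Hxin (conj Hq1 (conj _ _)))) (conj _ (conj _ Hsgn))).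
  - now exists (slope p q), (snd p - slope p q * fst p).
  - intros c d Hc Hd Hcd Haff.
    destruct (F_segment_maximal lam n p q c d x ltac:(lra) Hadj Hc Hd Hcd Hxin Haff).
    repeat split; lra.
  - now exists (slope p q).
  - rewrite !(F_on_segment lam n p q _ Hadj) by lra.
    now rewrite lin_difference_quotient by lra.
Qed.
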